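(* Let $t,r$ be positive integers and let $b$ be a positive integer having property $\mathcal{P}$ with respect to $2^r t$. Then $x^{2^r t}+b^{2^r}$ is reducible over $\mathbb{Z}$ if and only if $t$ is even, $r=1$, and $b=2d^2$ for some positive integer $d$.
   Context: For a positive integer $N$, a positive integer $b$ has property $\mathcal{P}$ with respect to $N$ if either $b$ is a prime number, or $b=(p_1^{b_1}p_2^{b_2}\cdots p_k^{b_k})^d$ where $k\ge 2$, $p_1,\dots,p_k$ are distinct primes, $b_1,\dots,b_k\ge 1$, $\gcd(b_1,\ldots,b_k)=1$, and $d$ is a positive integer with $\gcd(d,N)=1$. A monic polynomial in $\mathbb{Z}[x]$ of degree $\ge 1$ is reducible over $\mathbb{Z}$ if it is a product of two polynomials in $\mathbb{Z}[x]$ of degree at least $1$. *)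

From mathcomp Require Import all_boot all_order all_algebra.
Set Implicit Arguments. Unset Strict Implicit. Unset Printing Implicit Defensive.
Import GRing.Theory Num.Theory.

Definition propP (N b : nat) : Prop :=
  prime b \/
  exists (ps es : seq nat) (d : nat),
    2 <= size ps /\ size es = size ps /\ uniq ps /\ all prime ps /\
    all (fun e => 0 < e) es /\ foldr gcdn 0 es = 1 /\
    0 < d /\ coprime d N /\
    b = (\prod_(i < size ps) (nth 0 ps i) ^ (nth 0 es i)) ^ d.

Definition reducible_Z (f : {poly int}) : Prop :=
  exists p q : {poly int}, [/\ (1 < size p)%N, (1 < size q)%N & f = (p * q)%R].

From HB Require Import structures.
From mathcomp Require Import all_boot all_order all_algebra all_field.
From mathcomp Require Import complex.
From mathcomp Require Import lra ring zify.
From Stdlib Require Import Classical.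
Set Implicit Arguments. Unset Strict Implicit. Unset Printing Implicit Defensive.
Import Order.TTheory GRing.Theory Num.Theory.

(* Write t = 2^a u with u odd, D = b^(2^(r-1)) and M = 2^(r-1+a) u, so that
   the polynomial is X^(2M) + D^2 = (X^M - iD)(X^M + iD) over Q(i).
   - Arithmetic: property P forces u | m whenever b^(E m) is a u-th power
     and u | N is coprime to E; so a monic factor of X^u + b^E over Q (whose
     constant term is an integer k with |k|^u = b^(E m)) has degree u.
   - Capelli's step: for F monic irreducible with F(0) != 0 and (-1)^deg F
     F(0) not a square, F(X^2) is irreducible (over any field of
     characteristic not 2).  This gives X^(2u) + D^2 irreducible over Q,
     hence X^u - iD irreducible over Q(i), and, when D is not twice a square
     (i.e. +-iD are not squares in Q(i)), X^M - iD irreducible over Q(i).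
   - Irreducibility of X^M - iD over Q(i) rules out any factorisation of
     X^(2M) + D^2 over Z, since integer factors are conjugation-invariant.
   - Conversely, D = 2w^2 forces r = 1 and b = 2w^2; and t odd means M = u.
     For t even and b = 2d^2, Sophie Germain's identity factors the
     polynomial. *)

Lemma logn_prod (p n : nat) (F : nat -> nat) :
  (forall j, j < n -> 0 < F j) ->
  logn p (\prod_(j < n) F j) = \sum_(j < n) logn p (F j).
Proof.
elim: n => [|n IHn] F_gt0; first by rewrite !big_ord0 logn1.
have F_gt0' j : j < n -> 0 < F j by move=> jn; apply: F_gt0; rewrite ltnS ltnW.
rewrite !big_ord_recr /= lognM ?IHn ?F_gt0 // prodn_gt0 // => i.
exact: F_gt0'.
Qed.

Lemma logn_factorisation (ps es : seq nat) (i : nat) :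
  uniq ps -> all prime ps -> i < size ps ->
  logn (nth 0 ps i) (\prod_(j < size ps) nth 0 ps j ^ nth 0 es j) = nth 0 es i.
Proof.
move=> ups pps isz.
have pr j : j < size ps -> prime (nth 0 ps j).
  by move=> jn; apply: (allP pps); rewrite mem_nth.
rewrite (@logn_prod _ _ (fun j => nth 0 ps j ^ nth 0 es j)); last first.
  by move=> j jn; rewrite expn_gt0 prime_gt0 ?pr.
under eq_bigr do rewrite lognX logn_prime ?pr //.
rewrite (bigD1 (Ordinal isz)) //= eqxx muln1 big1 ?addn0 // => j /eqP ji.
rewrite nth_uniq //; case: eqP => [ji' | _]; last by rewrite muln0.
by case: ji; apply: val_inj.
Qed.

Lemma dvdn_mul_foldr_gcd (u k : nat) (es : seq nat) :
  (forall e, e \in es -> u %| k * e) -> u %| k * foldr gcdn 0 es.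
Proof.
elim: es => [|e es IHes] H /=; first by rewrite muln0 dvdn0.
rewrite muln_gcdr dvdn_gcd H ?mem_head // IHes // => x xs.
by apply: H; rewrite in_cons xs orbT.
Qed.

(* For b = (prod p_i^e_i)^d one compares the p_i-adic valuations and uses
   gcd(e_i) = 1 and gcd(d, u) = 1. *)
Lemma propP_power_dvd (N b c u E m : nat) :
  propP N b -> u %| N -> coprime u E -> c ^ u = b ^ (E * m) -> u %| m.
Proof.
move=> hP uN cuE hc.
have val p : logn p c * u = E * m * logn p b.
  by rewrite mulnC -lognX hc lognX.
case: hP => [b_pr | [ps [es [d [_ [ses [ups [pps [_ [ges [_ [cdN bE]]]]]]]]]]]].
  have := val b; rewrite [logn b b]logn_prime // eqxx muln1 => e.
  by rewrite -(Gauss_dvdr _ cuE) -e dvdn_mull.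
have cud : coprime u d by rewrite coprime_sym (coprime_dvdr uN cdN).
rewrite -(Gauss_dvdl _ cud) -[m * d]muln1 -ges.
apply: dvdn_mul_foldr_gcd => e ein.
have ies : index e es < size ps by rewrite -ses index_mem.
have := val (nth 0 ps (index e es)).
rewrite bE lognX logn_factorisation // nth_index // => ve.
rewrite -(Gauss_dvdr _ cuE) !mulnA -[E * m * d * e]mulnA -ve.
exact: dvdn_mull.
Qed.

Lemma two_adic (t : nat) : 0 < t -> exists a u, t = 2 ^ a * u /\ odd u.
Proof.
move=> t_gt0; have [u cu tu] := pfactor_coprime (isT : prime 2) t_gt0.
by exists (logn 2 t), u; rewrite -coprime2n mulnC.
Qed.

(* b^(2^(r-1)) can only be twice a square when r = 1, by parity of the
   2-adic valuation. *)
Lemma twice_square_power (b r w : nat) : 0 < b -> 0 < r ->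
  b ^ (2 ^ r.-1) = 2 * w ^ 2 -> r = 1 /\ b = 2 * w ^ 2.
Proof.
move=> b_gt0; case: r => [|[|r]] // _ h.
have w_gt0 : 0 < w.
  rewrite lt0n; apply/eqP => w0; move: h; rewrite w0 exp0n // muln0 => /eqP.
  by rewrite expn_eq0 (gtn_eqF b_gt0).
have := congr1 (fun n => odd (logn 2 n)) h.
rewrite /= lognX lognM ?expn_gt0 ?w_gt0 // lognX [logn 2 2]logn_prime //=.
by rewrite !oddM oddX.
Qed.

Local Open Scope ring_scope.

Lemma coef_compN (R : comNzRingType) (p : {poly R}) (i : nat) :
  (p \Po - 'X)`_i = (-1) ^+ i * p`_i.
Proof.
elim/poly_ind: p i => [|q c IHq] i; first by rewrite comp_poly0 !coef0 mulr0.
rewrite comp_poly_MXaddC mulrN coefD coefN coefMX !coefD coefMX !coefC.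
case: i => [|j] /=; first by rewrite oppr0 add0r mul1r.
by rewrite !addr0 IHq exprS mulN1r mulNr.
Qed.

Section SquareSubstitution.

Variable K : fieldType.
Hypothesis two_neq0 : (2 : K) != 0.
Implicit Types (p q F G : {poly K}) (c : K).

Lemma size_compN p : size (p \Po - 'X) = size p.
Proof. by rewrite size_comp_poly2 // size_polyN size_polyX. Qed.

Lemma compNK p : p \Po - 'X \Po - 'X = p.
Proof. by rewrite -comp_polyA raddfN /= comp_polyX opprK comp_polyXr. Qed.

Lemma compX2N p : p \Po 'X^2 \Po - 'X = p \Po 'X^2.
Proof. by rewrite -comp_polyA comp_Xn_poly sqrrN. Qed.

Lemma size_compX2 p : p != 0 -> size (p \Po 'X^2) = ((size p).-1 * 2)%N.+1.
Proof.
move=> p0; have := size_comp_poly p 'X^2; rewrite size_polyXn /= => <-.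
by rewrite prednK // lt0n size_poly_eq0 comp_poly_eq0 ?size_polyXn.
Qed.

Lemma compX2_inj : injective (fun p => p \Po 'X^2).
Proof.
move=> p q pq; apply/polyP => i; have := congr1 (fun r : {poly K} => r`_(i * 2)%N) pq.
by rewrite /= !coef_comp_poly_Xn ?dvdn_mull // mulnK.
Qed.

Lemma eq_opp_eq0 c : c = - c -> c = 0.
Proof.
move=> cN; apply/eqP; rewrite -[c == 0]orFb -(negPf two_neq0) -mulf_eq0.
by rewrite mulr2n mulrDl mul1r {1}cN addNr.
Qed.

Lemma even_compX2 p : p \Po - 'X = p -> p = even_poly p \Po 'X^2.
Proof.
move=> pN; suff p_odd0 : odd_poly p = 0.
  by rewrite -{1}(poly_even_odd p) p_odd0 comp_poly0 mul0r addr0.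
apply/polyP => i; rewrite coef_odd_poly coef0; apply: eq_opp_eq0.
have := congr1 (fun q : {poly K} => q`_(i.*2.+1)) pN.
by rewrite /= coef_compN exprS -muln2 exprM sqrr_sign mulr1 mulN1r => ->.
Qed.

Lemma compX2_dvdp G F : G \Po 'X^2 %| F \Po 'X^2 -> G %| F.
Proof.
have [->|G0] := eqVneq G 0.
  by rewrite comp_poly0 dvd0p comp_poly_eq0 ?size_polyXn // dvd0p.
case/dvdpP => Q FQ.
have GX0 : G \Po 'X^2 != 0 by rewrite comp_poly_eq0 ?size_polyXn.
have QN : Q \Po - 'X = Q.
  by apply: (mulIf GX0); rewrite -{1}(compX2N G) -comp_polyM -FQ compX2N.
suff -> : F = even_poly Q * G by apply: dvdp_mull.
by apply: compX2_inj; rewrite /= comp_polyM -even_compX2.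
Qed.

Lemma irredp_scale p c : c != 0 -> irreducible_poly p -> irreducible_poly (c *: p).
Proof.
move=> c0 [p1 p_irr]; split => [|d d1]; first by rewrite size_scale.
by rewrite dvdpZr // => /(p_irr d d1) /eqp_trans; apply; rewrite eqp_sym eqp_scale.
Qed.

Lemma monic_irreducible_divisor q : (1 < size q)%N ->
  exists2 h, [/\ irreducible_poly h & h \is monic] & h %| q.
Proof.
have [n] := ubnP (size q); elim: n q => // n IHn q szq sq1.
have lc0 : lead_coef q != 0 by rewrite lead_coef_eq0 -size_poly_gt0 ltnW.
have [q_irr | q_red] := classic (irreducible_poly q).
  exists ((lead_coef q)^-1 *: q); last by rewrite dvdpZl ?invr_eq0.
  split; last by apply/monicP; rewrite lead_coefZ mulVf.
  by apply: irredp_scale q_irr; rewrite invr_eq0.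
have [d d1 [dq dnq]] : exists2 d : {poly K}, size d != 1 & d %| q /\ ~~ (d %= q).
  apply: NNPP => nd; apply: q_red; split => // d d1 dq.
  by apply: NNPP => dnq; apply: nd; exists d => //; split => //; apply/negP.
have q0 : q != 0 by rewrite -size_poly_gt0 ltnW.
have d0 : d != 0 by apply: contraTneq dq => ->; rewrite dvd0p.
have sdq : (size d < size q)%N by rewrite ltn_neqAle dvdp_leq // dvdp_size_eqp ?dnq.
have sd1 : (1 < size d)%N.
  by move: d1 d0; rewrite -size_poly_eq0; case: (size d) => [|[]].
have [h hirr hd] := IHn d (leq_trans sdq szq) sd1.
by exists h => //; apply: dvdp_trans dq.
Qed.

(* The mirror of p: for p monic of degree m, (-1)^m p(-X) is the monic
   polynomial whose roots are the opposites of those of p. *)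
Definition mirror p := (-1) ^+ (size p).-1 *: (p \Po - 'X).

Lemma size_mirror p : size (mirror p) = size p.
Proof. by rewrite size_scale ?signr_eq0 // size_compN. Qed.

Lemma mirror_monic p : p \is monic -> mirror p \is monic.
Proof.
move=> /monicP p1; apply/monicP.
rewrite lead_coefZ lead_coef_comp ?size_polyN ?size_polyX // p1 mul1r.
by rewrite lead_coefN lead_coefX -expr2 sqrr_sign.
Qed.

Lemma mirror_compN p : mirror p \Po - 'X = (-1) ^+ (size p).-1 *: p.
Proof. by rewrite linearZ /= compNK. Qed.

Lemma horner0_mirror p : (mirror p).[0] = (-1) ^+ (size p).-1 * p.[0].
Proof. by rewrite hornerZ horner_comp hornerN hornerX oppr0. Qed.

Lemma size_mul_mirror p : (1 < size p)%N ->
  size (p * mirror p) = ((size p).-1 * 2)%N.+1.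
Proof.
move=> p1; have p0 : p != 0 by rewrite -size_poly_gt0 ltnW.
have pN0 : mirror p != 0 by rewrite -size_poly_eq0 size_mirror size_poly_eq0.
by rewrite size_mul // size_mirror; move: p1; case: (size p) => // n _; lia.
Qed.

Lemma dvdp_mirror p F : p %| F \Po 'X^2 -> mirror p %| F \Po 'X^2.
Proof.
by move=> pF; rewrite dvdpZl ?signr_eq0 // -compX2N dvdp_comp_poly.
Qed.

(* For F irreducible, an even divisor of F(X^2) is a constant or of full
   size, since it is G(X^2) for a divisor G of F. *)
Lemma even_dvdp_compX2 F Q : irreducible_poly F -> Q != 0 ->
  Q \Po - 'X = Q -> Q %| F \Po 'X^2 ->
  size Q = 1%N \/ size Q = size (F \Po 'X^2).
Proof.
move=> Firr Q0 QN; rewrite (even_compX2 QN) in Q0 * => /compX2_dvdp GF.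
have G0 : even_poly Q != 0 by apply: contraNneq Q0 => ->; rewrite comp_poly0.
have F0 := irredp_neq0 Firr.
rewrite !size_compX2 //.
by case: (irredp_XsubCP Firr GF) => /eqp_size ->; [left; rewrite size_poly1 | right].
Qed.

Section Factor.
Variables F h : {poly K}.
Hypotheses (Fmon : F \is monic) (Firr : irreducible_poly F) (F00 : F.[0] != 0).
Hypotheses (hirr : irreducible_poly h) (hmon : h \is monic).
Hypothesis hP : h %| F \Po 'X^2.

Lemma self_mirror_factor : mirror h = h -> size h = size (F \Po 'X^2).
Proof.
move=> hh; have h0 := irredp_neq0 hirr; have [h1 _] := hirr.
have hN : h \Po - 'X = (-1) ^+ (size h).-1 *: h.
  have := congr1 (fun r => (-1) ^+ (size h).-1 *: r) hh.
  by rewrite /= /mirror scalerA -expr2 sqrr_sign scale1r.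
have even_m : ~~ odd (size h).-1.
  apply: contra F00 => odd_m; apply/eqP.
  have h00 : h.[0] = 0.
    have sgn : (-1 : K) ^+ (size h).-1 = -1 by rewrite -signr_odd odd_m.
    apply: eq_opp_eq0; have := congr1 (fun r : {poly K} => r`_0) hN.
    by rewrite /= coef_compN coefZ sgn horner_coef0 mul1r mulN1r.
  have /root_dvdp : root h 0 by rewrite /root h00.
  by move/(_ _ hP); rewrite /root horner_comp hornerXn expr0n => /eqP.
rewrite -signr_odd (negPf even_m) scale1r in hN.
case: (even_dvdp_compX2 Firr h0 hN hP) => // h1'.
by move: h1; rewrite h1'.
Qed.

Lemma mirror_pair_factor : coprimep h (mirror h) -> h * mirror h = F \Po 'X^2.
Proof.
move=> hhN; have h0 := irredp_neq0 hirr; have [h1 _] := hirr.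
have hN0 : mirror h != 0 by rewrite -size_poly_eq0 size_mirror size_poly_eq0.
have HP : h * mirror h %| F \Po 'X^2 by rewrite Gauss_dvdp // hP dvdp_mirror.
have HN : (h * mirror h) \Po - 'X = h * mirror h.
  by rewrite comp_polyM mirror_compN /mirror -!scalerAr mulrC.
case: (even_dvdp_compX2 Firr (mulf_neq0 h0 hN0) HN HP) => [|sHP].
  by rewrite size_mul_mirror // => -[]; move: h1; case: (size h) => [|[]].
apply/eqP; rewrite -eqp_monic ?monicMl ?mirror_monic //.
  by rewrite -dvdp_size_eqp // sHP.
apply/monicP; rewrite lead_coef_comp ?size_polyXn // (monicP Fmon).
by rewrite lead_coefXn expr1n mulr1.
Qed.

End Factor.

(* A proper monic irreducible
   factor h cannot be its own mirror, and if it is coprime to its mirror then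
   F(X^2) = h * mirror h has constant term (-1)^deg F h(0)^2. *)
Lemma irreducible_compX2 F : F \is monic -> irreducible_poly F -> F.[0] != 0 ->
  (forall c, c ^+ 2 != (-1) ^+ (size F).-1 * F.[0]) ->
  irreducible_poly (F \Po 'X^2).
Proof.
move=> Fmon Firr F00 nosq; have F0 := irredp_neq0 Firr; have [F1 _] := Firr.
have P0 : F \Po 'X^2 != 0 by rewrite comp_poly_eq0 ?size_polyXn.
have sP := size_compX2 F0.
split=> [|q q1 qP]; first by rewrite sP; move: F1; case: (size F) => // n; lia.
apply/negPn/negP => qnP.
have q0 : q != 0 by apply: contraTneq qP => ->; rewrite dvd0p.
have sq1 : (1 < size q)%N.
  by move: q1 q0; rewrite -size_poly_eq0; case: (size q) => [|[]].
have [h [hirr hmon] hq] := monic_irreducible_divisor sq1.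
have hP := dvdp_trans hq qP.
have shP : (size h < size (F \Po 'X^2))%N.
  apply: leq_ltn_trans (dvdp_leq q0 hq) _.
  by rewrite ltn_neqAle dvdp_leq // dvdp_size_eqp ?qnP.
have := irreducible_poly_coprime (mirror h) hirr.
case: (boolP (h %| mirror h)) => [hhN _ | _ hhN].
  have hh : mirror h = h.
    apply/eqP; rewrite eq_sym -eqp_monic ?mirror_monic // -dvdp_size_eqp //.
    by rewrite size_mirror.
  by move: shP; rewrite (self_mirror_factor Firr F00 hirr hP hh) ltnn.
have PhN := mirror_pair_factor Fmon Firr hirr hmon hP hhN.
have eN : (size h).-1 = (size F).-1.
  have [h1 _] := hirr; move: sP; rewrite -PhN size_mul_mirror //.
  by move=> /eqP; rewrite eqSS eqn_mul2r /= => /eqP.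
have := nosq h.[0]; rewrite -eN.
have -> : F.[0] = (F \Po 'X^2).[0] by rewrite horner_comp hornerXn expr0n.
rewrite -PhN hornerM horner0_mirror [h.[0] * _]mulrCA !mulrA -expr2 sqrr_sign.
by rewrite mul1r -expr2 eqxx.
Qed.

End SquareSubstitution.

(* A rational number whose n-th power (n > 0) is an integer is an integer:
   num^n = z den^n with num, den coprime forces den = 1. *)
Lemma rat_root_int (q : rat) (n : nat) (z : int) : (0 < n)%N ->
  q ^+ n = z%:~R -> exists2 k : int, q = k%:~R & k ^+ n = z.
Proof.
move=> n_gt0 qn.
have num_n : numq q ^+ n = z * denq q ^+ n.
  by apply: (@intr_inj rat); rewrite rmorphXn /= numqE exprMn qn rmorphM rmorphXn.
have cop : coprime (`|numq q| ^ n) (`|denq q| ^ n).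
  by rewrite coprimeXl // coprimeXr // coprime_num_den.
have den_n1 : (`|denq q| ^ n = 1)%N.
  apply/eqP; rewrite -dvdn1 -(eqnP cop) dvdn_gcd dvdnn andbT.
  by rewrite -!abszX num_n abszM dvdn_mull.
have den1 : `|denq q|%N = 1%N.
  by apply/eqP; rewrite -(eqn_exp2r _ _ n_gt0) exp1n den_n1.
have q_num : q = (numq q)%:~R by rewrite numqE -absz_denq den1 mulr1.
by exists (numq q) => //; apply: (@intr_inj rat); rewrite rmorphXn /= -q_num.
Qed.

(* The constant term of a monic factor g of X^u + B over Q satisfies
   g(0)^u = ((-1)^(u+1) B)^deg g: over the algebraic closure g(0) is, up to
   sign, the product of deg g roots of X^u + B. *)
Lemma monic_factor_const (u : nat) (B : rat) (g : {poly rat}) :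
  g \is monic -> g %| 'X^u + B%:P ->
  g.[0] ^+ u = ((-1) ^+ u.+1 * B) ^+ (size g).-1.
Proof.
move=> gmon gB; pose G := map_poly (ratr : rat -> algC) g.
have [rs Grs] := closed_field_poly_normal G.
have Gmon : G \is monic by rewrite map_monic.
rewrite (monicP Gmon) scale1r in Grs.
have sG : (size g).-1 = size rs.
  rewrite -(size_map_poly (ratr : {rmorphism rat -> algC}) g) -/G Grs.
  by rewrite size_prod_XsubC.
have roots : all (fun z => z ^+ u == - ratr B) rs.
  apply/allP => z zr; have : root G z by rewrite Grs root_prod_XsubC.
  have GB : G %| map_poly (ratr : rat -> algC) ('X^u + B%:P) by rewrite dvdp_map.
  move/(root_dvdp GB).
  by rewrite /root rmorphD /= map_polyXn map_polyC hornerD hornerXn hornerC addr_eq0.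
have prod_u : (\prod_(z <- rs) z) ^+ u = (- ratr B) ^+ size rs.
  elim: rs roots {Grs sG} => [|z s IHs]; first by rewrite big_nil expr1n.
  by rewrite /= big_cons => /andP [/eqP zu /IHs su]; rewrite exprMn zu su exprS.
apply: (fmorph_inj (ratr : {rmorphism rat -> algC})).
rewrite !rmorphXn rmorphM rmorphXn rmorphN rmorph1 -horner_map /= -/G.
rewrite rmorph0 Grs horner_coef0 coef0_prod_XsubC exprMn sG prod_u.
by rewrite -exprM mulnC exprM -exprMn exprS mulN1r mulNr mulrN.
Qed.

(* For odd u dividing N and coprime to E, and b with property P with respect
   to N, X^u + b^E is irreducible over Q: a monic factor of degree m has an
   integer constant term k with |k|^u = b^(E m), whence u | m. *)
Lemma irreducible_XnaddC_propP (N b u E : nat) : (0 < u)%N -> odd u ->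
  propP N b -> (u %| N)%N -> coprime u E ->
  irreducible_poly ('X^u + ((b ^ E)%N%:R)%:P : {poly rat}).
Proof.
move=> u_gt0 odd_u hP uN cuE; set F := 'X^u + _.
have sF : size F = u.+1 by rewrite size_XnaddC.
split=> [|q q1 qF]; first by rewrite sF ltnS.
have q0 : q != 0 by apply: contraTneq qF => ->; rewrite dvd0p -size_poly_eq0 sF.
have lc0 : lead_coef q != 0 by rewrite lead_coef_eq0.
set g := (lead_coef q)^-1 *: q.
have gmon : g \is monic by apply/monicP; rewrite lead_coefZ mulVf.
have sg : size g = size q by rewrite size_scale // invr_eq0.
have := monic_factor_const gmon (_ : g %| F); rewrite dvdpZl ?invr_eq0 //.
rewrite -signr_odd /= odd_u mul1r -natrX sg => /(_ qF) g0u.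
have [k _ ku] := rat_root_int (z := ((b ^ E) ^ (size q).-1)%N) u_gt0 g0u.
have um : (u %| (size q).-1)%N.
  by apply: (propP_power_dvd (c := `|k|%N) hP uN cuE); rewrite -abszX ku expnM.
have sq1 : (1 < size q)%N.
  by move: q1 q0; rewrite -size_poly_eq0; case: (size q) => [|[]].
have squ : (size q <= u.+1)%N by rewrite -sF dvdp_leq // -size_poly_eq0 sF.
have := dvdn_leq (_ : 0 < (size q).-1)%N um.
by rewrite -dvdp_size_eqp // sF => um'; apply/eqP; move: um' squ sq1; lia.
Qed.

(* Gaussian rationals Q(i).  Complex conjugation on Q(i) is a ring morphism
   (the library only equips conjc with this structure over real closed
   fields). *)
Notation Qi := (rat[i]).

Definition conjq (z : Qi) : Qi := Complex (complex.Re z) (- complex.Im z).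

Lemma conjq_additive : additive conjq.
Proof. by move=> [a b] [c d]; rewrite /conjq /= opprD. Qed.

Lemma conjq_multiplicative : multiplicative conjq.
Proof.
split=> [[a b] [c d]|]; rewrite /conjq /= ?oppr0 //.
by congr Complex; rewrite ?mulrN ?mulNr ?opprK // opprD.
Qed.

HB.instance Definition _ := GRing.isAdditive.Build Qi Qi conjq conjq_additive.
HB.instance Definition _ :=
  GRing.isMultiplicative.Build Qi Qi conjq conjq_multiplicative.

Lemma conjqK : involutive conjq.
Proof. by move=> [a b]; rewrite /conjq /= opprK. Qed.

Definition ratQi : {rmorphism rat -> Qi} := real_complex rat.

Definition conjp (p : {poly Qi}) : {poly Qi} := map_poly conjq p.

Lemma conjpK : involutive conjp.
Proof.
by move=> p; rewrite /conjp -map_poly_comp (eq_map_poly conjqK) map_poly_id.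
Qed.

Lemma conjp_ratQi (p : {poly rat}) : conjp (map_poly ratQi p) = map_poly ratQi p.
Proof.
by rewrite /conjp -map_poly_comp; apply: eq_map_poly => x /=; rewrite /conjq /= oppr0.
Qed.

Lemma conjp_fixed (p : {poly Qi}) : conjp p = p ->
  p = map_poly ratQi (map_poly (@complex.Re rat) p).
Proof.
move=> pp; apply/polyP => i; rewrite coef_map /= coef_map_id0 //.
have := congr1 (fun q : {poly Qi} => q`_i) pp; rewrite /= /conjp coef_map /=.
by case: p`_i => a b [] bN; congr Complex; lra.
Qed.

Definition iD (D : nat) : Qi := Complex 0 D%:R.

Lemma iD_neq0 (D : nat) : (0 < D)%N -> iD D != 0.
Proof. by move=> D_gt0; apply/eqP => -[] /eqP; rewrite pnatr_eq0 (gtn_eqF D_gt0). Qed.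

Lemma conjq_iD (D : nat) : conjq (iD D) = - iD D.
Proof. by rewrite /conjq /iD /=; congr Complex; rewrite oppr0. Qed.

Lemma iD_sqr (D : nat) : iD D ^+ 2 = - ratQi (D ^ 2)%N%:R.
Proof.
rewrite expr2 /iD /= natrX.
by congr Complex; rewrite ?mul0r ?mulr0 ?add0r ?addr0 ?sub0r ?oppr0 // expr2.
Qed.

Lemma XnaddC_sqr_factor (M D : nat) :
  map_poly ratQi ('X^(2 * M) + ((D ^ 2)%N%:R)%:P) =
  ('X^M - (iD D)%:P) * ('X^M + (iD D)%:P).
Proof.
rewrite rmorphD /= map_polyXn map_polyC /= -[ratQi _]opprK -iD_sqr.
by rewrite polyCN rmorphXn mulnC exprM; ring.
Qed.

Lemma conjp_XnsubC_iD (M D : nat) :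
  conjp ('X^M - (iD D)%:P) = 'X^M + (iD D)%:P.
Proof. by rewrite /conjp rmorphB /= map_polyXn map_polyC /= conjq_iD polyCN opprK. Qed.

Lemma twice_rat_square (x : rat) (D : nat) :
  2 * x ^+ 2 = D%:R -> exists w : nat, D = (2 * w ^ 2)%N.
Proof.
move=> xD; have x2 : (2 * x) ^+ 2 = ((2 * D)%N%:Z)%:~R.
  by rewrite -pmulrn natrM -xD; ring.
have [k _ k2] := rat_root_int (isT : (0 < 2)%N) x2.
have kD : (`|k| ^ 2 = 2 * D)%N by rewrite -abszX k2.
have /dvdnP [w kw] : (2 %| `|k|)%N.
  have : (2 %| `|k| ^ 2)%N by rewrite kD dvdn_mulr.
  by rewrite Euclid_dvdX // => /andP [].
by exists w; move: kD; rewrite kw; lia.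
Qed.

(* Real and imaginary parts of c^2 = +-iD give 2 (Re c)^2 = D. *)
Lemma sqr_eq_iD (c : Qi) (D : nat) :
  c ^+ 2 = iD D \/ c ^+ 2 = - iD D -> exists w : nat, D = (2 * w ^ 2)%N.
Proof.
case: c => x y; rewrite expr2 /iD => cD; apply: (@twice_rat_square x).
have [re im] : x * x - y * y = 0 /\ (x * y + y * x = D%:R \/ x * y + y * x = - D%:R).
  by case: cD => -[] re im; rewrite ?oppr0 in re; split => //; [left | right].
have : (x - y) * (x + y) = 0 by rewrite mulrDr !mulrBl [y * x]mulrC addrA subrK.
have D_ge0 : 0 <= D%:R :> rat by rewrite ler0n.
move/eqP; rewrite mulf_eq0 => /orP [|] /eqP xy.
  have yx : y = x by apply/eqP; rewrite eq_sym -subr_eq0 xy.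
  by rewrite yx in im; case: im => im; nra.
have yx : y = - x by apply/eqP; rewrite -addr_eq0 addrC xy.
by rewrite yx in im; case: im => im; nra.
Qed.

Lemma compX2_XnaddC (R : comNzRingType) (n : nat) (c : R) :
  ('X^n + c%:P) \Po 'X^2 = 'X^(2 * n) + c%:P.
Proof. by rewrite raddfD /= comp_Xn_poly comp_polyC -exprM. Qed.

(* For odd u, irreducibility of X^u + D^2 over Q lifts to X^(2u) + D^2, since
   -D^2 is not a square in Q. *)
Lemma irreducible_X2naddC_sqr (u D : nat) : (0 < u)%N -> (0 < D)%N -> odd u ->
  irreducible_poly ('X^u + ((D ^ 2)%N%:R)%:P : {poly rat}) ->
  irreducible_poly ('X^(2 * u) + ((D ^ 2)%N%:R)%:P : {poly rat}).
Proof.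
move=> u_gt0 D_gt0 odd_u Firr; rewrite -compX2_XnaddC.
have F0 : ('X^u + ((D ^ 2)%N%:R)%:P : {poly rat}).[0] = (D ^ 2)%N%:R.
  by rewrite hornerD hornerXn expr0n (gtn_eqF u_gt0) add0r hornerC.
apply: irreducible_compX2 => //; first exact: monicXnaddC.
  by rewrite F0 pnatr_eq0 expn_eq0 (gtn_eqF D_gt0).
move=> c; rewrite size_XnaddC //= -signr_odd odd_u F0 mulN1r.
have : (0 : rat) < (D ^ 2)%N%:R by rewrite ltr0n expn_gt0 D_gt0.
by apply: contraTneq => c2; rewrite -leNgt -oppr_ge0 -c2 sqr_ge0.
Qed.

(* X^(2u) + D^2 irreducible over Q implies X^u - iD irreducible over Q(i):
   for a proper factor q, q * conj q is a proper factor over Q. *)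
Lemma irreducible_XnsubC_iD (u D : nat) : (0 < u)%N ->
  irreducible_poly ('X^(2 * u) + ((D ^ 2)%N%:R)%:P : {poly rat}) ->
  irreducible_poly ('X^u - (iD D)%:P).
Proof.
move=> u_gt0 Firr; have sP : size ('X^u - (iD D)%:P) = u.+1 by rewrite size_XnsubC.
split=> [|q q1 qP]; first by rewrite sP ltnS.
apply/negPn/negP => qn.
have q0 : q != 0 by apply: contraTneq qP => ->; rewrite dvd0p -size_poly_eq0 sP.
have sq1 : (1 < size q)%N.
  by move: q1 q0; rewrite -size_poly_eq0; case: (size q) => [|[]].
have squ : (size q < u.+1)%N.
  by rewrite -sP ltn_neqAle dvdp_size_eqp // qn dvdp_leq // -size_poly_eq0 sP.
have sR : size (q * conjp q) = (size q + size q).-1.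
  by rewrite size_mul ?size_map_poly // -size_poly_eq0 size_map_poly size_poly_eq0.
have RF : q * conjp q %| map_poly ratQi ('X^(2 * u) + ((D ^ 2)%N%:R)%:P).
  by rewrite XnaddC_sqr_factor -conjp_XnsubC_iD dvdp_mul // dvdp_map.
have /conjp_fixed Rreal : conjp (q * conjp q) = q * conjp q.
  by rewrite /conjp rmorphM /= -/(conjp q) -/(conjp (conjp q)) conjpK mulrC.
rewrite Rreal dvdp_map in RF.
have sR' : size (map_poly (@complex.Re rat) (q * conjp q)) = (size q + size q).-1.
  by rewrite -sR [in RHS]Rreal size_map_poly.
case: (irredp_XsubCP Firr RF) => /eqp_size; rewrite sR' ?size_poly1.
  by lia.
by rewrite size_XnaddC ?muln_gt0 //; lia.
Qed.

(* Iterated Capelli steps over Q(i): when D is not twice a square, neither iD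
   nor -iD is a square in Q(i), so X^(2^k u) - iD stays irreducible. *)
Lemma irreducible_XnsubC_iD_iter (u D k : nat) : (0 < u)%N -> (0 < D)%N ->
  (forall w, D <> (2 * w ^ 2)%N) ->
  irreducible_poly ('X^u - (iD D)%:P) ->
  irreducible_poly ('X^(2 ^ k * u) - (iD D)%:P).
Proof.
move=> u_gt0 D_gt0 Dnot irr_u.
have nosq c : c ^+ 2 != iD D /\ c ^+ 2 != - iD D.
  split; apply/eqP => c2.
    by have [w /Dnot] := sqr_eq_iD (or_introl c2).
  by have [w /Dnot] := sqr_eq_iD (or_intror c2).
elim: k => [|k IHk]; first by rewrite expn0 mul1n.
have n_gt0 : (0 < 2 ^ k * u)%N by rewrite muln_gt0 expn_gt0 u_gt0.
have F0 : ('X^(2 ^ k * u) - (iD D)%:P).[0] = - iD D.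
  by rewrite hornerD hornerXn expr0n (gtn_eqF n_gt0) add0r hornerN hornerC.
rewrite expnS -mulnA -polyCN -compX2_XnaddC polyCN.
apply: irreducible_compX2 => //; first exact: monicXnsubC.
  by rewrite F0 oppr_eq0 iD_neq0.
move=> c; rewrite size_XnsubC //= F0 -signr_odd.
by case: (odd _); rewrite ?expr1 ?expr0 ?mulN1r ?mul1r ?opprK; case: (nosq c).
Qed.

(* X^M - iD and X^M + iD are coprime: their difference is the unit 2iD. *)
Lemma coprimep_XnsubC_XnaddC_iD (M D : nat) : (0 < D)%N ->
  coprimep ('X^M - (iD D)%:P) ('X^M + (iD D)%:P).
Proof.
move=> D_gt0; apply/coprimepP => d d1 d2.
have : d %| ('X^M + (iD D)%:P) - ('X^M - (iD D)%:P) by rewrite dvdp_sub.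
rewrite opprB addrC addrA subrK -polyCD => dc.
rewrite /eqp dvd1p andbT (dvdp_trans dc) // dvdp1 size_polyC.
by rewrite -mulr2n -mulr_natr mulf_neq0 ?iD_neq0.
Qed.

(* If X^M - iD is irreducible over Q(i), then X^(2M) + D^2 admits no
   factorisation over Z: an integer factor divisible by X^M - iD is also
   divisible by its conjugate X^M + iD, hence has full degree. *)
Lemma not_reducible_X2naddC (M D : nat) : (0 < M)%N -> (0 < D)%N ->
  irreducible_poly ('X^M - (iD D)%:P) ->
  ~ reducible_Z ('X^(2 * M) + ((D ^ 2)%N%:R)%:P).
Proof.
move=> M_gt0 D_gt0 irr [p [q [sp sq pq]]].
pose toQi (w : {poly int}) := map_poly ratQi (map_poly (intr : int -> rat) w).
have size_toQi w : size (toQi w) = size w by rewrite size_map_poly size_rat_int_poly.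
have toQi_pq : toQi (p * q) = ('X^M - (iD D)%:P) * ('X^M + (iD D)%:P).
  by rewrite -XnaddC_sqr_factor -pq /toQi rmorphD /= map_polyXn map_polyC /= rmorph_nat.
have size_pq : size (p * q) = (2 * M).+1 by rewrite -pq size_XnaddC // muln_gt0.
have full (w : {poly int}) : (1 < size w)%N -> 'X^M - (iD D)%:P %| toQi w ->
    ((2 * M).+1 <= size w)%N.
  move=> w1 Pw; have w0 : toQi w != 0 by rewrite -size_poly_gt0 size_toQi ltnW.
  have Pw' : 'X^M + (iD D)%:P %| toQi w.
    by rewrite -conjp_XnsubC_iD -[toQi w]conjp_ratQi dvdp_map.
  have PP : ('X^M - (iD D)%:P) * ('X^M + (iD D)%:P) %| toQi w.
    by rewrite Gauss_dvdp ?Pw ?Pw' // coprimep_XnsubC_XnaddC_iD.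
  by have := dvdp_leq w0 PP; rewrite -toQi_pq !size_toQi size_pq.
have : 'X^M - (iD D)%:P %| toQi p * toQi q.
  have -> : toQi p * toQi q = toQi (p * q) by rewrite /toQi !rmorphM.
  by rewrite toQi_pq dvdp_mulr.
have p0 : p != 0 by rewrite -size_poly_gt0 ltnW.
have q0 : q != 0 by rewrite -size_poly_gt0 ltnW.
have {}size_pq : (size p + size q).-1 = (2 * M).+1 by rewrite -size_mul.
case: (boolP ('X^M - (iD D)%:P %| toQi p)) => [/(full p sp) | Pp].
  by move: size_pq; lia.
rewrite Gauss_dvdpr ?irreducible_poly_coprime // => /(full q sq).
by move: size_pq; lia.
Qed.

Lemma irreducible_odd_part (N b u r : nat) : (0 < b)%N -> (0 < u)%N -> (0 < r)%N ->
  odd u -> propP N b -> (u %| N)%N ->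
  irreducible_poly ('X^u - (iD (b ^ 2 ^ r.-1))%:P).
Proof.
move=> b_gt0 u_gt0 r_gt0 odd_u hP uN.
have D_gt0 : (0 < b ^ 2 ^ r.-1)%N by rewrite expn_gt0 b_gt0.
have bD : (b ^ 2 ^ r = (b ^ 2 ^ r.-1) ^ 2)%N by rewrite -expnM -expnSr prednK.
have cu : coprime u (2 ^ r) by rewrite coprimeXr // coprimen2.
have := irreducible_XnaddC_propP u_gt0 odd_u hP uN cu; rewrite bD.
by move/(irreducible_X2naddC_sqr u_gt0 D_gt0 odd_u)/(irreducible_XnsubC_iD u_gt0).
Qed.

(* Sophie Germain's identity x^4 + 4y^4 = (x^2 + 2xy + 2y^2)(x^2 - 2xy + 2y^2)
   makes X^(4s) + (2d^2)^2 reducible. *)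
Lemma reducible_sophie_germain (s d : nat) : (0 < s)%N ->
  reducible_Z ('X^(2 ^ 1 * (2 * s)) + (((2 * d ^ 2) ^ (2 ^ 1))%N%:R)%:P).
Proof.
move=> s_gt0.
pose f (e : int) : {poly int} := 'X^(2 * s) + e *: 'X^s + ((2 * d ^ 2)%N%:R)%:P.
have size_f e : size (f e) = (2 * s).+1.
  rewrite /f -addrA size_polyDl ?size_polyXn // (leq_ltn_trans (size_polyD _ _)) //.
  rewrite gtn_max (leq_ltn_trans (size_scale_leq _ _)) ?size_polyXn ?ltnS.
    by rewrite (leq_trans (size_polyC_leq1 _)) // muln_gt0.
  by rewrite -[X in (X < _)%N]mul1n ltn_pmul2r.
exists (f (2 * d)%N%:R), (f (- (2 * d)%N%:R)); rewrite !size_f ltnS muln_gt0 s_gt0.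
have -> : (2 ^ 1 * (2 * s) = s * 4)%N by rewrite expn1; lia.
have X2s : 'X^(2 * s) = ('X^s) ^+ 2 :> {poly int} by rewrite -exprM mulnC.
split=> //; rewrite /f X2s scaleNr -!mul_polyC !polyC_natr !(natrM, natrX) expn1 exprM.
ring.
Qed.

(* With t = 2^a u (u odd) and D = b^(2^(r-1)) the polynomial is
   X^(2M) + D^2 with M = 2^(r-1+a) u; it can only factor when D is twice a
   square, i.e. r = 1 and b = 2w^2, and when M > u, i.e. t is even. *)
Theorem lemma6 (t r b : nat) :
  (0 < t)%N -> (0 < r)%N -> (0 < b)%N -> propP (2 ^ r * t) b ->
  (reducible_Z ('X^(2 ^ r * t) + ((b ^ (2 ^ r))%N)%:R%:P)
   <-> [/\ ~~ odd t, r = 1%N & exists d : nat, (0 < d)%N /\ b = (2 * d ^ 2)%N]).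
Proof.
move=> t_gt0 r_gt0 b_gt0 hP; split; last first.
  case=> /negPf t_even -> [d [_ ->]].
  have t2 : t = (2 * t./2)%N by rewrite -{1}(odd_double_half t) t_even -mul2n.
  have s_gt0 : (0 < t./2)%N by move: t_gt0; rewrite {1}t2 muln_gt0.
  by rewrite t2; apply: reducible_sophie_germain.
have [a [u [tu odd_u]]] := two_adic t_gt0.
have u_gt0 : (0 < u)%N by move: t_gt0; rewrite tu muln_gt0 => /andP [].
set D := (b ^ 2 ^ r.-1)%N; have D_gt0 : (0 < D)%N by rewrite expn_gt0 b_gt0.
have irr_u : irreducible_poly ('X^u - (iD D)%:P).
  apply: (irreducible_odd_part b_gt0 u_gt0 r_gt0 odd_u hP).
  by rewrite tu dvdn_mull ?dvdn_mull.
have -> : (2 ^ r * t = 2 * (2 ^ (r.-1 + a) * u))%N.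
  by rewrite tu -{1}(prednK r_gt0) expnS expnD !mulnA.
have -> : (b ^ 2 ^ r = D ^ 2)%N by rewrite -expnM -expnSr prednK.
move/not_reducible_X2naddC; rewrite muln_gt0 expn_gt0 u_gt0 => /(_ isT D_gt0) red.
have [w Dw] : exists w, D = (2 * w ^ 2)%N.
  apply: NNPP => Dnot; apply/red/irreducible_XnsubC_iD_iter => // w Dw.
  by apply: Dnot; exists w.
have [r1 bw] := twice_square_power b_gt0 r_gt0 Dw.
split=> //; last first.
  by exists w; split=> //; rewrite lt0n; apply: contraTneq b_gt0 => w0; rewrite bw w0.
apply: contra_notN red => odd_t.
have a0 : a = 0%N by move: odd_t; rewrite tu oddM oddX orbF; case: (a).
by rewrite r1 a0 /= mul1n.
Qed.
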